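(* Let $n\ge1$ and let $\mathcal{S}\subseteq\mathbb{R}_{++}$ be a finite set. A function $g:\overline{\mathcal{S}}^n\to[0,1]$ belongs to $\mathcal{G}_n(\mathcal{S})$ if and only if there exists $G\in\mathcal{G}_n(\mathbb{R}_{++})$ such that $g$ is the restriction of $G$ to $\overline{\mathcal{S}}^n$.
   Context: For $D\subseteq\mathbb{R}$ put $\overline{D}=D\cup\{0\}\cup\{\infty\}$ (so $\overline{\mathbb{R}_{++}}=[0,\infty]$). For $\mathbf{x}\le\mathbf{y}$ (coordinatewise) let $V_{xy}=\{x_1,y_1\}\times\cdots\times\{x_n,y_n\}$, and for $\mathbf{b}\in V_{xy}$ let $\mathrm{sgn}(\mathbf{b})=1$ if $b_i=x_i$ for an even number of indices $i$ and $-1$ otherwise. A function $G$ is $n$-increasing on $\overline{D}^n$ if $\sum_{\mathbf{b}\in V_{xy}}\mathrm{sgn}(\mathbf{b})G(\mathbf{b})\ge0$ for all $\mathbf{x}\le\mathbf{y}$ in $\overline{D}^n$. For $\mathcal{S}\subseteq\mathbb{R}_{++}$, $\mathcal{G}_n(\mathcal{S})$ is the set of functions $G:\overline{\mathcal{S}}^n\to[0,1]$ that are right continuous on $\overline{\mathcal{S}}^n$, $n$-increasing on $\overline{\mathcal{S}}^n$, satisfy $G(\mathbf{z})=0$ whenever at least one $z_i=0$, and satisfy $G(\infty,\dots,\infty)=1$. *)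

From HB Require Import structures.
From mathcomp Require Import all_boot all_order all_algebra.
From mathcomp Require Import all_classical all_reals.
From mathcomp Require Import ereal.
Set Implicit Arguments. Unset Strict Implicit. Unset Printing Implicit Defensive.
Import Order.TTheory GRing.Theory Num.Theory.
Local Open Scope classical_set_scope.
Local Open Scope ring_scope.

Definition Dbar (R : realType) (D : set R) : set (\bar R) :=
  [set x | x = 0%E \/ x = +oo%E \/ exists2 r, D r & x = r%:E].

Definition in_Dbarn (R : realType) (n : nat) (D : set R) (z : 'I_n -> \bar R) :=
  forall i, Dbar D (z i).

Definition vle (R : realType) (n : nat) (x y : 'I_n -> \bar R) :=
  forall i, (x i <= y i)%E.

Definition vertex (R : realType) (n : nat) (x y : 'I_n -> \bar R)
  (b : {ffun 'I_n -> bool}) : 'I_n -> \bar R :=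
  fun i => if b i then y i else x i.

Definition vsgn (R : realType) {n : nat} (b : {ffun 'I_n -> bool}) : R :=
  (-1) ^+ #|[pred i | ~~ b i]|.

Definition n_increasing (R : realType) (n : nat) (D : set R)
  (G : ('I_n -> \bar R) -> R) :=
  forall x y, in_Dbarn D x -> in_Dbarn D y -> vle x y ->
    0 <= \sum_(b : {ffun 'I_n -> bool}) vsgn R b * G (vertex x y b).

(* right continuity on \overline{D}^n (w.r.t. the order topology of [0,∞]):
   for y in the domain with y >= x and y_i <= x_i + delta for all i
   (when x_i = +oo this forces y_i = +oo), |G y - G x| < eps. *)
Definition right_continuous_on (R : realType) (n : nat) (D : set R)
  (G : ('I_n -> \bar R) -> R) :=
  forall x, in_Dbarn D x -> forall eps : R, 0 < eps ->
    exists2 delta : R, 0 < delta &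
      forall y, in_Dbarn D y -> vle x y ->
        (forall i, (y i <= x i + delta%:E)%E) -> `|G y - G x| < eps.

(* \mathcal{G}_n(S): G is only considered on \overline{S}^n *)
Definition in_Gn (R : realType) (n : nat) (S : set R)
  (G : ('I_n -> \bar R) -> R) :=
  [/\ forall z, in_Dbarn S z -> 0 <= G z <= 1,
      right_continuous_on S G,
      n_increasing S G,
      forall z, in_Dbarn S z -> (exists i, z i = 0%E) -> G z = 0
    & G (fun _ => +oo%E) = 1].

Definition Rpp (R : realType) : set R := [set r | 0 < r].
Arguments Rpp R : clear implicits.

(** Round every coordinate down to the largest point of [\overline{S}] below
    it.  This rounding is monotone, fixes [\overline{S}], and, since the
    finitely many points of [S] are isolated, is constant on a right
    neighbourhood of every point.  So [g] composed with it is right continuous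
    whatever [g] is, inherits [n]-monotonicity and the boundary conditions
    from [g], and extends [g] to [\overline{R_{++}}^n].  Conversely, every
    condition defining [G_n] passes to restrictions. *)

From mathcomp Require Import all_boot all_order all_algebra.
From mathcomp Require Import all_classical all_reals.
From mathcomp Require Import ereal lra.
Import Order.TTheory GRing.Theory Num.Theory.
Local Open Scope classical_set_scope.
Local Open Scope ring_scope.

Set Implicit Arguments.
Unset Strict Implicit.
Unset Printing Implicit Defensive.

Section Dbar.
Variable R : realType.

Lemma Dbar_subset (S T : set R) : S `<=` T -> Dbar S `<=` Dbar T.
Proof.
by move=> ST w [->|[->|[r /ST Tr ->]]]; [left|right; left|right; right; exists r].
Qed.

Lemma Dbar_Rpp_ge0 (w : \bar R) : Dbar (Rpp R) w -> (0 <= w)%E.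
Proof. by move=> [->|[->|[r r0 ->]]] //; rewrite lee_fin ltW. Qed.

Lemma Dbar0 (S : set R) : Dbar S 0%E.
Proof. by left. Qed.

Lemma Dbaroo (S : set R) : Dbar S +oo%E.
Proof. by right; left. Qed.

End Dbar.

Lemma comp_vertex (R : realType) (n : nat) (phi : \bar R -> \bar R)
    (x y : 'I_n -> \bar R) (b : {ffun 'I_n -> bool}) :
  phi \o vertex x y b = vertex (phi \o x) (phi \o y) b.
Proof. by apply: funext => i; rewrite /vertex /=; case: (b i). Qed.

Lemma in_Gn_restrict (R : realType) (n : nat) (S T : set R)
    (G g : ('I_n -> \bar R) -> R) :
  S `<=` T -> in_Gn T G -> (forall z, in_Dbarn S z -> g z = G z) ->
  in_Gn S g.
Proof.
move=> ST [G01 Grc Ginc G0 G1] gG.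
have DST (z : 'I_n -> \bar R) : in_Dbarn S z -> in_Dbarn T z.
  by move=> Sz i; exact: Dbar_subset (Sz i).
split.
- by move=> z Sz; rewrite gG //; apply/G01/DST.
- move=> x Sx eps eps0; have [d d0 Hd] := Grc x (DST x Sx) eps eps0.
  by exists d => // y Sy xy yd; rewrite !gG //; apply: Hd => //; exact: DST.
- move=> x y Sx Sy xy.
  rewrite (eq_bigr (fun b => vsgn R b * G (vertex x y b))) => [|b _].
    by apply: Ginc => //; exact: DST.
  by rewrite gG // => i; rewrite /vertex; case: (b i).
- by move=> z Sz zi; rewrite gG // G0 //; exact: DST.
- by rewrite gG // => i; exact: Dbaroo.
Qed.

Lemma uniform_pos_bound (R : realType) (I : finType) (P : I -> R -> Prop) :
  (forall i d d', 0 < d' -> d' <= d -> P i d -> P i d') ->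
  (forall i, exists2 d, 0 < d & P i d) ->
  exists2 d, 0 < d & forall i, P i d.
Proof.
move=> Pmono Pex; have /choice[d dP] : forall i, exists d, 0 < d /\ P i d.
  by move=> i; have [d d0 Pd] := Pex i; exists d.
have m0 : 0 < \big[Num.min/1]_i d i by apply: lt_bigmin => // i; case: (dP i).
exists (\big[Num.min/1]_i d i) => // i; have [_ Pd] := dP i.
by apply: Pmono Pd => //; exact: bigmin_le.
Qed.

Lemma seq_gap (R : realType) (B : seq R) (r : R) :
  exists2 d, 0 < d & forall s, s \in B -> r < s -> r + d < s.
Proof.
set m := \big[Num.min/1]_(s <- B | r < s) (s - r).
have m0 : 0 < m by apply: lt_bigmin => // s rs; rewrite subr_gt0.
exists (m / 2) => [|s sB rs]; first by rewrite divr_gt0.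
have : m <= s - r by apply: ge_bigmin_seq.
lra.
Qed.

Section Composition.
Variables (R : realType) (n : nat) (S T : set R) (phi : \bar R -> \bar R).
Hypothesis phi_Dbar : forall w, Dbar T w -> Dbar S (phi w).
Hypothesis phi_homo : forall w w', Dbar T w -> Dbar T w' ->
  (w <= w')%E -> (phi w <= phi w')%E.
Hypothesis phi0 : phi 0%E = 0%E.
Hypothesis phioo : phi +oo%E = +oo%E.
Hypothesis phi_right_const : forall w, Dbar T w ->
  exists2 d : R, 0 < d & forall y, Dbar T y ->
    (w <= y)%E -> (y <= w + d%:E)%E -> phi y = phi w.

Let phi_Dbarn (z : 'I_n -> \bar R) : in_Dbarn T z -> in_Dbarn S (phi \o z).
Proof. by move=> Tz i; exact: phi_Dbar. Qed.

Lemma right_continuous_comp (g : ('I_n -> \bar R) -> R) :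
  right_continuous_on T (fun z => g (phi \o z)).
Proof.
move=> x Tx eps eps0.
pose P i d := forall y, Dbar T y -> (x i <= y)%E -> (y <= x i + d%:E)%E ->
  phi y = phi (x i).
have [|i|d d0 Pd] := @uniform_pos_bound R _ P.
- move=> i d d' _ d'd Pi y Ty xy yd; apply: Pi => //.
  by apply: le_trans yd _; rewrite leeD2l // lee_fin.
- exact: phi_right_const.
exists d => // y Ty xy yd.
have -> : phi \o y = phi \o x by apply: funext => i; exact: Pd.
by rewrite subrr normr0.
Qed.

Lemma n_increasing_comp (g : ('I_n -> \bar R) -> R) :
  n_increasing S g -> n_increasing T (fun z => g (phi \o z)).
Proof.
move=> ginc x y Tx Ty xy.
under eq_bigr => b _ do rewrite comp_vertex.
by apply: ginc; [exact: phi_Dbarn|exact: phi_Dbarn|move=> i; exact: phi_homo].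
Qed.

Lemma in_Gn_comp (g : ('I_n -> \bar R) -> R) :
  in_Gn S g -> in_Gn T (fun z => g (phi \o z)).
Proof.
move=> [g01 _ ginc g0 g1]; split.
- by move=> z Tz; apply/g01/phi_Dbarn.
- exact: right_continuous_comp.
- exact: n_increasing_comp.
- by move=> z Tz [i zi]; apply: g0; [exact: phi_Dbarn|exists i; rewrite /= zi].
- by rewrite -g1; congr g; apply: funext => i /=.
Qed.

End Composition.

Section Efloor.
Variables (R : realType) (B : seq R).

(* For [z < 0] the value is the junk [0]. *)
Definition efloor (z : \bar R) : \bar R :=
  \big[Order.max/0%E]_(w <- +oo%E :: map EFin B | (w <= z)%E) w.

Lemma efloor_Dbar z : Dbar [set` B] (efloor z).
Proof.
rewrite /efloor big_seq_cond; elim/big_ind: _ => [|u v Du Dv|w].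
- exact: Dbar0.
- by rewrite /Order.max; case: ifP.
- rewrite inE => /andP[/predU1P[->|/mapP[r rB ->]] _]; first exact: Dbaroo.
  by right; right; exists r.
Qed.

Lemma efloor_le z : (0 <= z)%E -> (efloor z <= z)%E.
Proof. by move=> z0; apply: bigmax_le. Qed.

Lemma le_efloor z w : Dbar [set` B] w -> (w <= z)%E -> (w <= efloor z)%E.
Proof.
move=> [->|[->|[r rB ->]]] wz; rewrite /efloor; first exact: bigmax_ge_id.
- exact: (@le_bigmax_seq _ _ _ _ _ +oo%E _ id (mem_head _ _) wz).
- by apply: (@le_bigmax_seq _ _ _ _ _ r%:E _ id _ wz); rewrite inE map_f ?orbT.
Qed.

Lemma efloor_id w : (0 <= w)%E -> Dbar [set` B] w -> efloor w = w.
Proof. by move=> w0 Bw; apply: le_anti; rewrite efloor_le //= le_efloor. Qed.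

Lemma efloor_homo z z' : (0 <= z)%E -> (z <= z')%E -> (efloor z <= efloor z')%E.
Proof.
move=> z0 zz'; apply: le_efloor; first exact: efloor_Dbar.
exact: le_trans (efloor_le z0) zz'.
Qed.

Lemma efloor_right_const z : (0 <= z)%E ->
  exists2 d : R, 0 < d & forall y,
    (z <= y)%E -> (y <= z + d%:E)%E -> efloor y = efloor z.
Proof.
case: z => [r| |] // r0.
  have [d d0 gap] := seq_gap B r.
  exists d => // y ry yrd; apply: le_anti; rewrite (efloor_homo r0 ry) andbT.
  have y0 : (0 <= y)%E by exact: le_trans ry.
  have fy := le_trans (efloor_le y0) yrd.
  apply: le_efloor; first exact: efloor_Dbar.
  case: (efloor_Dbar y) fy => [->//|[->|[s sB ->]]]; first by rewrite leye_eq.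
  rewrite lee_fin => srd.
  by rewrite leNgt; apply/negP => /(gap s sB); rewrite ltNge srd.
by exists 1 => // y; rewrite leye_eq => /eqP ->.
Qed.

Lemma in_Gn_efloor (n : nat) (g : ('I_n -> \bar R) -> R) :
  in_Gn [set` B] g -> in_Gn (Rpp R) (fun z => g (efloor \o z)).
Proof.
apply: in_Gn_comp.
- by move=> w _; exact: efloor_Dbar.
- by move=> w w' /Dbar_Rpp_ge0 w0 _; exact: efloor_homo.
- by apply: efloor_id => //; exact: Dbar0.
- by apply: efloor_id => //; exact: Dbaroo.
- move=> w /Dbar_Rpp_ge0 /efloor_right_const[d d0 Hd].
  by exists d => // y _; exact: Hd.
Qed.

End Efloor.

Theorem lemma1 (R : realType) (n : nat) (S : set R)
  (hn : (0 < n)%N) (hS : S `<=` Rpp R) (hfin : finite_set S)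
  (g : ('I_n -> \bar R) -> R) :
  in_Gn S g <->
  exists G : ('I_n -> \bar R) -> R,
    in_Gn (Rpp R) G /\ (forall z, in_Dbarn S z -> g z = G z).
Proof.
split=> [gS|[G [GRpp gG]]]; last exact: in_Gn_restrict hS GRpp gG.
have [B SB] := (finite_seqP S).1 hfin; subst S.
exists (fun z => g (efloor B \o z)); split; first exact: in_Gn_efloor.
move=> z Bz; congr g; apply: funext => i /=; rewrite efloor_id //.
exact/Dbar_Rpp_ge0/(Dbar_subset hS).
Qed.
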